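(* Let $(G,\cdot)$ be a loop with identity $e$ and let $(H,\cdot)$ be a non-trivial subloop of $G$ such that $(xs\cdot z)s=x(sz\cdot s)$ for all $x,z\in G$ and $s\in H$. Then $$xs^m\cdot s^n=xs^{m+n}$$ for all $x\in G$, $s\in H$ and $m,n\in\mathbb{Z}$.
   Context: Juxtaposition binds more tightly than $\cdot$. For $s\in H$, the left and right inverses of $s$ coincide under the hypothesis; denote this common inverse by $s^{-1}$. Powers of $s\in H$ are defined by $s^0=e$, $s^n=s^{n-1}\cdot s$ for $n>0$, and $s^n=(s^{-1})^{|n|}$ for $n<0$. *)

(* Loops are given equationally: a binary operation with
   identity e and left/right divisions. *)
From Stdlib Require Import ZArith.

Section Loops.
Variables (G : Type) (mul ldiv rdiv : G -> G -> G) (e : G).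

Definition is_loop : Prop :=
  (forall x, mul e x = x) /\ (forall x, mul x e = x) /\
  (forall a b, mul a (ldiv a b) = b) /\ (forall a b, ldiv a (mul a b) = b) /\
  (forall a b, mul (rdiv b a) a = b) /\ (forall a b, rdiv (mul b a) a = b).

Definition is_subloop (H : G -> Prop) : Prop :=
  H e /\ (forall a b, H a -> H b -> H (mul a b)) /\
  (forall a b, H a -> H b -> H (ldiv a b)) /\
  (forall a b, H a -> H b -> H (rdiv a b)).

Definition nontrivial (H : G -> Prop) : Prop := exists s, H s /\ s <> e.

(* The (right) inverse of s: the unique t with s t = e. *)
Definition linv (s : G) : G := ldiv s e.

Fixpoint npow (s : G) (n : nat) : G :=
  match n with O => e | S k => mul (npow s k) s end.

Definition zpow (s : G) (n : Z) : G :=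
  match n with
  | Z0 => e
  | Zpos p => npow s (Pos.to_nat p)
  | Zneg p => npow (linv s) (Pos.to_nat p)
  end.
End Loops.

(* Right multiplication R_s : y |-> y s is a bijection of G with inverse
   R_(s^-1): by the Bol identity ((y s) s^-1) s = y ((s s^-1) s) = y s.  The Bol
   identity also gives s^(n+1) = s s^n and hence, by a two-step induction,
   x s^n = R_s^n x; the same holds for s^-1, which lies in H.  So x s^k is the
   k-th integer iterate of R_s applied to x, and x s^m . s^n = x s^(m+n) is the
   additivity of integer iterates of a bijection. *)
From Stdlib Require Import ZArith Lia.

Section IntegerIterates.
Variables (T : Type) (f g : T -> T).
Hypothesis fK : forall y, f (g y) = y.
Hypothesis gK : forall y, g (f y) = y.

(* [iter_diff a b] stands for f^(a - b), with an integer difference. *)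
Definition iter_diff (a b : nat) (x : T) : T := Nat.iter a f (Nat.iter b g x).

Lemma iter_diff_succ a b x : iter_diff (S a) (S b) x = iter_diff a b x.
Proof. unfold iter_diff. now rewrite Nat.iter_succ_r, Nat.iter_succ, fK. Qed.

Lemma iter_diff_addn a b d x : iter_diff (a + d) (b + d) x = iter_diff a b x.
Proof.
  induction d as [|d IHd]; [now rewrite !Nat.add_0_r|].
  now rewrite !Nat.add_succ_r, iter_diff_succ.
Qed.

Lemma iter_diff_eq a b c d x : a + d = c + b -> iter_diff a b x = iter_diff c d x.
Proof.
  intros Hsum. rewrite <- (iter_diff_addn a b d), Hsum, <- (iter_diff_addn c d b).
  now rewrite (Nat.add_comm d b).
Qed.

Lemma f_iter_g_comm b y : f (Nat.iter b g y) = Nat.iter b g (f y).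
Proof.
  induction b as [|b IHb]; simpl; [reflexivity|].
  now rewrite fK, <- IHb, gK.
Qed.

Lemma iter_f_g_comm a b x :
  Nat.iter a f (Nat.iter b g x) = Nat.iter b g (Nat.iter a f x).
Proof.
  induction a as [|a IHa]; simpl; [reflexivity|].
  now rewrite IHa, f_iter_g_comm.
Qed.

Lemma iter_diff_comp a b c d x :
  iter_diff a b (iter_diff c d x) = iter_diff (a + c) (b + d) x.
Proof.
  unfold iter_diff. now rewrite <- (iter_f_g_comm c b), !Nat.iter_add.
Qed.

Definition ziter (k : Z) (x : T) : T := iter_diff (Z.to_nat k) (Z.to_nat (- k)) x.

Lemma ziter_add m n x : ziter n (ziter m x) = ziter (m + n) x.
Proof. unfold ziter. rewrite iter_diff_comp. apply iter_diff_eq. lia. Qed.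

End IntegerIterates.

Section RightBol.
Variables (G : Type) (mul ldiv rdiv : G -> G -> G) (e : G).
Hypothesis loop : is_loop G mul ldiv rdiv e.

Definition right_bol_at (a : G) : Prop :=
  forall x z, mul (mul (mul x a) z) a = mul x (mul (mul a z) a).

Let rmul (a : G) : G -> G := fun y => mul y a.

Lemma mul_npow a n x :
  right_bol_at a -> mul x (npow G mul e a n) = Nat.iter n (rmul a) x.
Proof.
  intros bol; destruct loop as [mul1g [mulg1 _]].
  enough (two_step : forall n, (forall x, mul x (npow G mul e a n) = Nat.iter n (rmul a) x)
                            /\ (forall x, mul x (npow G mul e a (S n)) = Nat.iter (S n) (rmul a) x))
    by apply two_step.
  clear n x; intros n; induction n as [|n [IHn IHSn]].
  - split; intros x; simpl; [apply mulg1 | now rewrite mul1g].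
  - split; [exact IHSn|]; intros x.
    assert (npow_succ_l : npow G mul e a (S n) = mul a (npow G mul e a n)).
    { rewrite <- (mul1g (npow G mul e a (S n))), IHSn, Nat.iter_succ_r, IHn.
      unfold rmul; now rewrite mul1g. }
    change (npow G mul e a (S (S n))) with (mul (npow G mul e a (S n)) a).
    rewrite npow_succ_l, <- bol, IHn.
    now rewrite (Nat.iter_succ_r (S n)), Nat.iter_succ.
Qed.

Variable s : G.
Hypothesis bol_s : right_bol_at s.

Lemma rmul_linvK y : mul (mul y s) (linv G ldiv e s) = y.
Proof.
  destruct loop as [mul1g [_ [mul_ldiv [_ [_ rdiv_mul]]]]].
  rewrite <- (rdiv_mul s (mul (mul y s) (linv G ldiv e s))), bol_s.
  unfold linv; now rewrite mul_ldiv, mul1g, rdiv_mul.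
Qed.

Lemma rmul_linvVK y : mul (mul y (linv G ldiv e s)) s = y.
Proof.
  destruct loop as [_ [_ [_ [_ [mul_rdiv _]]]]].
  rewrite <- (mul_rdiv s y) at 1. now rewrite rmul_linvK.
Qed.

Hypothesis bol_linv : right_bol_at (linv G ldiv e s).

Lemma mul_zpow k x :
  mul x (zpow G mul ldiv e s k) = ziter G (rmul s) (rmul (linv G ldiv e s)) k x.
Proof.
  destruct loop as [_ [mulg1 _]].
  unfold ziter, iter_diff; destruct k; simpl.
  - apply mulg1.
  - now apply mul_npow.
  - now apply mul_npow.
Qed.

Lemma mul_zpowD x m n :
  mul (mul x (zpow G mul ldiv e s m)) (zpow G mul ldiv e s n)
  = mul x (zpow G mul ldiv e s (m + n)).
Proof.
  rewrite !mul_zpow. apply ziter_add; intros y; [apply rmul_linvVK | apply rmul_linvK].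
Qed.

End RightBol.

Theorem theorem3p3 (G : Type) (mul ldiv rdiv : G -> G -> G) (e : G)
  (H : G -> Prop) :
  is_loop G mul ldiv rdiv e ->
  is_subloop G mul ldiv rdiv e H ->
  nontrivial G e H ->
  (forall x z s, H s -> mul (mul (mul x s) z) s = mul x (mul (mul s z) s)) ->
  forall (x s : G) (m n : Z), H s ->
    mul (mul x (zpow G mul ldiv e s m)) (zpow G mul ldiv e s n)
    = mul x (zpow G mul ldiv e s (m + n)).
Proof.
  intros loop [He [_ [H_ldiv _]]] _ bol x s m n Hs.
  assert (H_linv : H (linv G ldiv e s)) by (apply H_ldiv; assumption).
  apply (mul_zpowD G mul ldiv rdiv e loop); intros y z; now apply bol.
Qed.
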